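(* Fix $\gamma \geq 1$ and $0 \leq \rho < 1$. Let $A(u,v) = (u,u+v)$, $\mathbf{1} = (1,1)$, $\mathbf{c} = (\gamma,1)$, and let $T,M:\mathbb{R}^2\to\mathbb{R}^2$ be defined by $$T\mathbf{x} = \begin{cases} A\mathbf{x} + \mathbf{1}, & \langle \mathbf{c},\mathbf{x}\rangle \leq -1/2,\\ A\mathbf{x}, & |\langle \mathbf{c},\mathbf{x}\rangle| < 1/2,\\ A\mathbf{x} - \mathbf{1}, & \langle \mathbf{c},\mathbf{x}\rangle \geq 1/2,\end{cases}\qquad M(u,v) = \begin{cases} T(\rho u,\rho v), & u \geq 0,\\ T(u,v), & u<0.\end{cases}$$ Let $S^+ = \{(u,v) : -1/2 \leq \gamma u + v \leq 1/2 + \gamma,\ 0 \leq u < 1\}$, $S^- = \{(u,v) : -(1/2+\gamma) \leq \gamma u + v \leq 1/2,\ -1 \leq u < 0\}$, and $S = S^+\cup S^-$. If $\mathbf{x}_0 \in S$, then the iterates $\mathbf{x}_n = M^n\mathbf{x}_0$ eventually remain in $S^+$ (there exists $N$ with $\mathbf{x}_n \in S^+$ for all $n \geq N$), and $\|\mathbf{x}_n\| \to 0$ as $n \to \infty$.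
   Context: $\langle\cdot,\cdot\rangle$ is the standard inner product on $\mathbb{R}^2$. *)

From Stdlib Require Import Reals.
Open Scope R_scope.

Definition ip (x y : R * R) : R := fst x * fst y + snd x * snd y.
Definition norm2 (x : R * R) : R := sqrt (ip x x).

Definition A_map (x : R * R) : R * R := (fst x, fst x + snd x).

Definition T_map (gamma : R) (x : R * R) : R * R :=
  let s := ip (gamma, 1) x in
  let y := A_map x in
  if Rle_dec s (-(1/2)) then (fst y + 1, snd y + 1)
  else if Rlt_dec (Rabs s) (1/2) then y
  else (fst y - 1, snd y - 1).
  (* last branch: s >= 1/2 (since s > -1/2 and |s| >= 1/2) *)

Definition M_map (gamma rho : R) (x : R * R) : R * R :=
  if Rle_dec 0 (fst x) then T_map gamma (rho * fst x, rho * snd x)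
  else T_map gamma x.

Definition Splus (gamma : R) (x : R * R) : Prop :=
  let '(u, v) := x in
  -(1/2) <= gamma * u + v <= 1/2 + gamma /\ 0 <= u < 1.

Definition Sminus (gamma : R) (x : R * R) : Prop :=
  let '(u, v) := x in
  -(1/2 + gamma) <= gamma * u + v <= 1/2 /\ -1 <= u < 0.

Definition S_set (gamma : R) (x : R * R) : Prop := Splus gamma x \/ Sminus gamma x.

Fixpoint iter_M (gamma rho : R) (n : nat) (x : R * R) : R * R :=
  match n with
  | O => x
  | S k => M_map gamma rho (iter_M gamma rho k x)
  end.

From Stdlib Require Import Reals Lra Psatz Lia.
Open Scope R_scope.

(* Points on the upper edge of S^- re-enter S after a few explicit steps, and Sinv := S^+ u (S^-
   minus that edge) is invariant. Translating S^- by (1,1) glues it onto S^+; in these lifted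
   coordinates M acts as x |-> r A x on S^+ and as x |-> A x - (0,1) on S^-. So the lifted
   abscissa u is multiplied by r at each visit to S^+ and is unchanged in S^-, while each step in
   S^- lowers the level <c,x> by 1 - u, so every stay in S^- ends. Hence u becomes small, and then
   each excursion into S^- lowers the level by at least 1/2, so the orbit reaches the region of
   S^+ where r <c,x> < 1/2 and u <= (1-r)/4. That region is invariant, M = r A on it, and
   (1-r) |<c,x>| + u contracts there by the factor r (2-r) < 1 and dominates the norm. *)

Lemma iter_M_add g r n m x : iter_M g r (n + m) x = iter_M g r n (iter_M g r m x).
Proof. induction n as [|n IH]; simpl; [reflexivity | now rewrite IH]. Qed.

Lemma norm2_le_abs x : norm2 x <= Rabs (fst x) + Rabs (snd x).
Proof.
  destruct x as [u v]; unfold norm2, ip; simpl.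
  pose proof (Rabs_pos u); pose proof (Rabs_pos v).
  assert (Rabs u * Rabs u = u * u) by (rewrite <- Rabs_mult; apply Rabs_right; nra).
  assert (Rabs v * Rabs v = v * v) by (rewrite <- Rabs_mult; apply Rabs_right; nra).
  rewrite <- (sqrt_Rsqr (Rabs u + Rabs v)) by lra.
  apply sqrt_le_1_alt; unfold Rsqr; nra.
Qed.

Lemma Un_cv_0_of_geometric_bound (a : nat -> R) (C q : R) (K : nat) : 0 <= q < 1 ->
  (forall n, (K <= n)%nat -> 0 <= a n <= C * q ^ (n - K)) -> Un_cv a 0.
Proof.
  intros hq ha eps heps.
  assert (hC : 0 < Rabs C + 1) by (pose proof (Rabs_pos C); lra).
  destruct (pow_lt_1_zero q ltac:(rewrite Rabs_right; lra) (eps / (Rabs C + 1)))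
    as [N hN]; [apply Rdiv_lt_0_compat; lra|].
  exists (N + K)%nat; intros n hn; unfold R_dist; rewrite Rminus_0_r.
  destruct (ha n ltac:(lia)) as [ha0 haC].
  specialize (hN (n - K)%nat ltac:(lia)).
  rewrite Rabs_right in hN by (apply Rle_ge, pow_le; lra).
  assert (hqn : 0 <= q ^ (n - K)) by (apply pow_le; lra).
  assert (C <= Rabs C + 1) by (pose proof (Rle_abs C); lra).
  assert (C * q ^ (n - K) <= (Rabs C + 1) * q ^ (n - K)) by (apply Rmult_le_compat_r; lra).
  assert ((Rabs C + 1) * q ^ (n - K) < (Rabs C + 1) * (eps / (Rabs C + 1)))
    by (apply Rmult_lt_compat_l; lra).
  rewrite Rabs_right by lra.
  replace eps with ((Rabs C + 1) * (eps / (Rabs C + 1))) by (field; lra).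
  lra.
Qed.

Lemma T_low g x : g * fst x + snd x <= -(1/2) ->
  T_map g x = (fst x + 1, fst x + snd x + 1).
Proof.
  intros h; unfold T_map, A_map, ip; simpl.
  rewrite Rmult_1_l; destruct (Rle_dec _ _); [reflexivity | lra].
Qed.

Lemma T_mid g x : -(1/2) < g * fst x + snd x < 1/2 -> T_map g x = A_map x.
Proof.
  intros h; unfold T_map, ip; simpl; rewrite Rmult_1_l.
  destruct (Rle_dec _ _); [lra|].
  destruct (Rlt_dec _ _) as [|habs]; [reflexivity|].
  exfalso; apply habs, Rabs_def1; lra.
Qed.

Lemma T_high g x : 1/2 <= g * fst x + snd x ->
  T_map g x = (fst x - 1, fst x + snd x - 1).
Proof.
  intros h; unfold T_map, A_map, ip; simpl; rewrite Rmult_1_l.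
  destruct (Rle_dec _ _); [lra|].
  destruct (Rlt_dec _ _) as [habs|]; [|reflexivity].
  rewrite Rabs_right in habs; lra.
Qed.

(* S is not forward invariant: M maps the edge g u + v = 1/2 of S^- to abscissae below -1. *)
Definition Sminus_strict (g : R) (x : R * R) : Prop :=
  let '(u, v) := x in -(1/2 + g) <= g * u + v < 1/2 /\ -1 <= u < 0.

Definition Sinv (g : R) (x : R * R) : Prop := Splus g x \/ Sminus_strict g x.

Definition lift (x : R * R) : R * R :=
  if Rle_dec 0 (fst x) then x else (fst x + 1, snd x + 1).

Lemma lift_nonneg u v : 0 <= u -> lift (u, v) = (u, v).
Proof. intros hu; unfold lift; simpl; destruct (Rle_dec 0 u); [reflexivity | lra]. Qed.

Lemma lift_neg u v : u < 0 -> lift (u, v) = (u + 1, v + 1).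
Proof. intros hu; unfold lift; simpl; destruct (Rle_dec 0 u); [lra | reflexivity]. Qed.

Lemma Splus_fst_nonneg g x : Splus g x -> 0 <= fst x.
Proof. destruct x as [u v]; intros [_ hu]; simpl; lra. Qed.

Section Dynamics.
Variables g r : R.
Hypothesis hg : 1 <= g.
Hypothesis hr : 0 <= r < 1.

Lemma M_nonneg_low u v : 0 <= u -> r * (g * u + v) <= -(1/2) ->
  M_map g r (u, v) = (r * u + 1, r * u + r * v + 1).
Proof.
  intros hu h; unfold M_map; simpl.
  destruct (Rle_dec 0 u); [|lra]. rewrite T_low; simpl; [reflexivity | nra].
Qed.

Lemma M_nonneg_mid u v : 0 <= u -> -(1/2) < r * (g * u + v) < 1/2 ->
  M_map g r (u, v) = (r * u, r * u + r * v).
Proof.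
  intros hu h; unfold M_map; simpl.
  destruct (Rle_dec 0 u); [|lra]. rewrite T_mid; simpl; [reflexivity | nra].
Qed.

Lemma M_nonneg_high u v : 0 <= u -> 1/2 <= r * (g * u + v) ->
  M_map g r (u, v) = (r * u - 1, r * u + r * v - 1).
Proof.
  intros hu h; unfold M_map; simpl.
  destruct (Rle_dec 0 u); [|lra]. rewrite T_high; simpl; [reflexivity | nra].
Qed.

Lemma M_neg_low u v : u < 0 -> g * u + v <= -(1/2) -> M_map g r (u, v) = (u + 1, u + v + 1).
Proof.
  intros hu h; unfold M_map; simpl.
  destruct (Rle_dec 0 u); [lra|]. now rewrite T_low.
Qed.

Lemma M_neg_mid u v : u < 0 -> -(1/2) < g * u + v < 1/2 -> M_map g r (u, v) = (u, u + v).
Proof.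
  intros hu h; unfold M_map; simpl.
  destruct (Rle_dec 0 u); [lra|]. now rewrite T_mid.
Qed.

Lemma M_neg_high u v : u < 0 -> 1/2 <= g * u + v -> M_map g r (u, v) = (u - 1, u + v - 1).
Proof.
  intros hu h; unfold M_map; simpl.
  destruct (Rle_dec 0 u); [lra|]. now rewrite T_high.
Qed.

Lemma lift_M_Splus u v : Splus g (u, v) -> lift (M_map g r (u, v)) = (r * u, r * u + r * v).
Proof.
  intros [hs hu]; destruct (Rlt_dec (r * (g * u + v)) (1/2)).
  - rewrite M_nonneg_mid by nra; apply lift_nonneg; nra.
  - rewrite M_nonneg_high, lift_neg by nra; f_equal; ring.
Qed.

Lemma lift_M_Sminus u v : Sminus_strict g (u, v) -> lift (M_map g r (u, v)) = (u + 1, u + v + 1).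
Proof.
  intros [hs hu]; destruct (Rle_dec (g * u + v) (-(1/2))).
  - rewrite M_neg_low, lift_nonneg by lra; reflexivity.
  - rewrite M_neg_mid, lift_neg by lra; reflexivity.
Qed.

Lemma M_Splus_to_Splus u v : Splus g (u, v) -> r * (g * u + v) < 1/2 -> Splus g (M_map g r (u, v)).
Proof. intros [hs hu] h; rewrite M_nonneg_mid by nra; simpl; nra. Qed.

Lemma M_Splus_to_Sminus u v : Splus g (u, v) -> 1/2 <= r * (g * u + v) ->
  Sminus_strict g (M_map g r (u, v)).
Proof. intros [hs hu] h; rewrite M_nonneg_high by nra; simpl; nra. Qed.

Lemma Sinv_M x : Sinv g x -> Sinv g (M_map g r x).
Proof.
  destruct x as [u v]; intros [hx | [hs hu]].
  - destruct (Rlt_dec (r * (g * u + v)) (1/2)).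
    + left; apply M_Splus_to_Splus; auto.
    + right; apply M_Splus_to_Sminus; auto; lra.
  - destruct (Rle_dec (g * u + v) (-(1/2))).
    + left; rewrite M_neg_low by lra; simpl; lra.
    + right; rewrite M_neg_mid by lra; simpl; lra.
Qed.

Definition reaches (P : R * R -> Prop) (x : R * R) : Prop :=
  exists k, P (iter_M g r k x).

Lemma reaches_now (P : R * R -> Prop) x : P x -> reaches P x.
Proof. now exists 0%nat. Qed.

Lemma reaches_step (P : R * R -> Prop) x y : M_map g r x = y -> reaches P y -> reaches P x.
Proof.
  intros <- [k hk]; exists (k + 1)%nat; now rewrite iter_M_add.
Qed.

Lemma reaches_bind (P Q : R * R -> Prop) x :
  reaches P x -> (forall y, P y -> reaches Q y) -> reaches Q x.
Proof.
  intros [k hk] hPQ; destruct (hPQ _ hk) as [j hj].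
  exists (j + k)%nat; now rewrite iter_M_add.
Qed.

Lemma reaches_mono (P Q : R * R -> Prop) x :
  reaches P x -> (forall y, P y -> Q y) -> reaches Q x.
Proof. intros hx hPQ; apply (reaches_bind P); auto using reaches_now. Qed.

Lemma reaches_Sinv_edge_tail w : 0 <= w -> 3 * w + g < 2 ->
  reaches (Sinv g) (w, 3 * w - g * w + g - 5/2).
Proof.
  intros hw hwg; set (v := 3 * w - g * w + g - 5/2).
  assert (hs : g * w + v = 3 * w + g - 5/2) by (unfold v; ring).
  destruct (Rle_lt_dec (r * (g * w + v)) (-(1/2))) as [hdeep | hshallow].
  2: { apply (reaches_step _ _ (r * w, r * w + r * v)); [apply M_nonneg_mid; nra|].
       apply reaches_now; left; simpl; nra. }
  apply (reaches_step _ _ (r * w + 1, r * w + r * v + 1)); [now apply M_nonneg_low|].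
  assert (hkick : 1/2 <= r * (g * (r * w + 1) + (r * w + r * v + 1))) by nra.
  apply (reaches_step _ _ (r * (r * w + 1) - 1, r * (r * w + 1) + r * (r * w + r * v + 1) - 1));
    [apply M_nonneg_high; nra|].
  apply reaches_now; destruct (Rlt_le_dec (r * (r * w + 1)) 1).
  - right; simpl.
    assert (0 <= (1 - r) * (g - 1)) by nra.
    assert (0 <= r * (- r * (g * w + v) - 1/2)) by nra.
    repeat split; nra.
  - left; simpl.
    assert (0 <= r * r + r - 1) by nra.
    assert (0 <= (r * r + r - 1) * (g - 1)) by nra.
    repeat split; nra.
Qed.

Lemma reaches_Sinv_edge u : -1 <= u < 0 -> reaches (Sinv g) (u, 1/2 - g * u).
Proof.
  intros hu.
  apply (reaches_step _ _ (u - 1, u - g * u - 1/2)).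
  { rewrite M_neg_high by lra; f_equal; field. }
  apply (reaches_step _ _ (u, 2 * u - g * u - 1/2)).
  { rewrite M_neg_low by nra; f_equal; field. }
  destruct (Rle_lt_dec (-(1/2 + g)) (2 * u - 1/2)).
  { apply reaches_now; right; simpl; lra. }
  apply (reaches_step _ _ (u + 1, 3 * (u + 1) - g * (u + 1) + g - 5/2)).
  { rewrite M_neg_low by lra; f_equal; field. }
  destruct (Rle_lt_dec (-(1/2)) (3 * (u + 1) + g - 5/2)).
  { apply reaches_now; left; simpl; nra. }
  apply reaches_Sinv_edge_tail; lra.
Qed.

Lemma reaches_Sinv x : S_set g x -> reaches (Sinv g) x.
Proof.
  destruct x as [u v]; intros [hx | [hs hu]].
  - apply reaches_now; now left.
  - destruct (Rlt_le_dec (g * u + v) (1/2)).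
    + apply reaches_now; right; split; auto; lra.
    + replace v with (1/2 - g * u) by lra; now apply reaches_Sinv_edge.
Qed.

Definition U (x : R * R) : R := fst (lift x).
Definition V (x : R * R) : R := g * fst (lift x) + snd (lift x).

Lemma UV_Splus u v : Splus g (u, v) -> U (u, v) = u /\ V (u, v) = g * u + v.
Proof. intros [_ hu]; unfold U, V; rewrite lift_nonneg by lra; auto. Qed.

Lemma UV_Sminus u v : Sminus_strict g (u, v) -> U (u, v) = u + 1 /\ V (u, v) = g * u + v + g + 1.
Proof. intros [_ hu]; unfold U, V; rewrite lift_neg by lra; simpl; split; ring. Qed.

Lemma UV_M_Sminus x : Sminus_strict g x ->
  U (M_map g r x) = U x /\ V (M_map g r x) = V x - (1 - U x).
Proof.
  destruct x as [u v]; intros hx; destruct (UV_Sminus u v hx) as [-> ->].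
  unfold U, V; rewrite lift_M_Sminus by auto; simpl; split; ring.
Qed.

Lemma reaches_Splus_from_Sminus_bounded n x : Sminus_strict g x -> V x - 1/2 < INR n * (1 - U x) ->
  reaches (fun y => Splus g y /\ U y = U x /\ V y <= V x - (1 - U x)) x.
Proof.
  revert x; induction n as [|n IH]; intros [u v] hx hn.
  - destruct (UV_Sminus u v hx) as [_ hV]; destruct hx; simpl in hn; lra.
  - destruct (UV_Sminus u v hx) as [hU _]; destruct (UV_M_Sminus _ hx) as [hU' hV'].
    assert (hUlt : U (u, v) < 1) by (destruct hx; lra).
    apply (reaches_step _ _ _ eq_refl).
    destruct (Sinv_M (u, v) (or_intror hx)) as [hy | hy].
    + apply reaches_now; repeat split; auto; lra.
    + refine (reaches_mono _ _ _ (IH _ hy _) _).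
      * rewrite hU', hV'; rewrite S_INR in hn; lra.
      * intros z (hz & hUz & hVz); repeat split; auto; lra.
Qed.

Lemma reaches_Splus_from_Sminus x : Sminus_strict g x ->
  reaches (fun y => Splus g y /\ U y = U x /\ V y <= V x - (1 - U x)) x.
Proof.
  destruct x as [u v]; intros hx.
  destruct (UV_Sminus u v hx) as [hU _]; destruct hx as [hs hu].
  destruct (INR_archimed (1 - U (u, v)) (V (u, v) - 1/2)) as [n hn]; [lra|].
  apply (reaches_Splus_from_Sminus_bounded n); [split |]; auto; lra.
Qed.

Lemma reaches_Splus_from_Sinv x : Sinv g x -> reaches (fun y => Splus g y /\ fst y = U x) x.
Proof.
  destruct x as [u v]; intros [hx | hx].
  - apply reaches_now; split; [auto | now rewrite (proj1 (UV_Splus u v hx))].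
  - apply (reaches_mono _ _ _ (reaches_Splus_from_Sminus _ hx)).
    intros [a b] (hy & hUy & _); split; auto.
    now rewrite <- hUy, (proj1 (UV_Splus a b hy)).
Qed.

Lemma reaches_Splus_fst_le_pow n x : Sinv g x -> reaches (fun y => Splus g y /\ fst y <= r ^ n) x.
Proof.
  intros hx; induction n as [|n IH].
  - apply (reaches_mono _ _ _ (reaches_Splus_from_Sinv x hx)).
    intros [u v] [hy _]; destruct hy; simpl; split; [split|]; auto; lra.
  - apply (reaches_bind _ _ _ IH); intros [u v] [hy hu].
    apply (reaches_step _ _ _ eq_refl).
    apply (reaches_mono _ _ _ (reaches_Splus_from_Sinv _ (Sinv_M _ (or_introl hy)))).
    intros z [hz hUz]; split; auto.
    unfold U in hUz; rewrite lift_M_Splus in hUz by auto; simpl in hUz.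
    rewrite hUz; simpl in hu |- *; apply Rmult_le_compat_l; lra.
Qed.

Definition Slinear (x : R * R) : Prop :=
  Splus g x /\ r * (g * fst x + snd x) < 1/2 /\ fst x <= (1 - r) / 4.

(* Once u <= (1-r)/4, each excursion through S^- lowers the level g u + v by at least 1/2. *)
Lemma reaches_Slinear_bounded n x : Splus g x -> fst x <= (1 - r) / 4 ->
  g * fst x + snd x < INR n / 2 - 1/2 -> reaches Slinear x.
Proof.
  revert x; induction n as [|n IH]; intros [u v] hx hu hn; simpl in hu.
  - destruct hx; simpl in hn; lra.
  - destruct (Rlt_dec (r * (g * u + v)) (1/2)) as [hlow | hhigh].
    { apply reaches_now; split; [|split]; simpl; auto. }
    assert (hy : Sminus_strict g (M_map g r (u, v))) by (apply M_Splus_to_Sminus; auto; lra).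
    assert (hUy : U (M_map g r (u, v)) = r * u) by (unfold U; now rewrite lift_M_Splus).
    assert (hVy : V (M_map g r (u, v)) = r * (g * u + v + u))
      by (unfold V; rewrite lift_M_Splus by auto; simpl; ring).
    apply (reaches_step _ _ _ eq_refl).
    apply (reaches_bind _ _ _ (reaches_Splus_from_Sminus _ hy)); intros [a b] (hz & hUz & hVz).
    destruct (UV_Splus a b hz) as [hUa hVa].
    destruct hx as [hs hu0].
    apply IH; auto; simpl.
    + rewrite <- hUa, hUz, hUy; nra.
    + apply Rnot_lt_le in hhigh.
      assert (hs2 : 1/2 <= g * u + v) by nra.
      assert ((1 - r) * (1/2) <= (1 - r) * (g * u + v)) by (apply Rmult_le_compat_l; lra).
      assert (r * u <= (1 - r) / 4) by nra.
      rewrite hVy, hUy in hVz; rewrite S_INR in hn; rewrite <- hVa; simpl in hn; nra.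
Qed.

Lemma M_Slinear x : Slinear x -> M_map g r x = (r * fst x, r * fst x + r * snd x).
Proof. destruct x as [u v]; intros [[hs hu] [hlow _]]; apply M_nonneg_mid; simpl in *; nra. Qed.

Lemma Slinear_M x : Slinear x -> Slinear (M_map g r x).
Proof.
  intros hx; rewrite M_Slinear by auto; destruct x as [u v].
  destruct hx as [[hs hu] [hlow hsmall]]; simpl in *.
  assert (r * u <= u) by nra.
  assert (r * (r * u) <= r * ((1 - r) / 4)) by (apply Rmult_le_compat_l; lra).
  assert (r * (r * (g * u + v)) <= r * (1/2)) by (apply Rmult_le_compat_l; lra).
  assert (0 < (1 - r) * (2 - r)) by (apply Rmult_lt_0_compat; lra).
  repeat split; simpl; nra.
Qed.

Lemma Slinear_iter k x : Slinear x -> Slinear (iter_M g r k x).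
Proof. intros hx; induction k as [|k IH]; simpl; auto using Slinear_M. Qed.

Definition lyap (x : R * R) : R := (1 - r) * Rabs (g * fst x + snd x) + fst x.

Lemma lyap_M x : Slinear x -> lyap (M_map g r x) <= r * (2 - r) * lyap x.
Proof.
  intros hx; rewrite M_Slinear by auto; destruct x as [u v].
  destruct hx as [[_ [hu _]] _]; unfold lyap; simpl in *.
  replace (g * (r * u) + (r * u + r * v)) with (r * ((g * u + v) + u)) by ring.
  rewrite Rabs_mult, (Rabs_right r) by lra.
  assert (htri : Rabs (g * u + v + u) <= Rabs (g * u + v) + u).
  { pose proof (Rabs_triang (g * u + v) u) as h; now rewrite (Rabs_right u) in h by lra. }
  assert (0 <= Rabs (g * u + v)) by apply Rabs_pos.
  assert ((1 - r) * Rabs (g * u + v + u) <= (1 - r) * (Rabs (g * u + v) + u))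
    by (apply Rmult_le_compat_l; lra).
  assert (0 <= r * ((1 - r) * ((1 - r) * Rabs (g * u + v))))
    by (repeat apply Rmult_le_pos; lra).
  nra.
Qed.

Lemma lyap_iter k x : Slinear x -> lyap (iter_M g r k x) <= (r * (2 - r)) ^ k * lyap x.
Proof.
  intros hx; induction k as [|k IH]; simpl; [lra|].
  assert (0 <= r * (2 - r)) by nra.
  apply (Rle_trans _ _ _ (lyap_M _ (Slinear_iter k x hx))).
  rewrite (Rmult_assoc _ (_ ^ k)); apply Rmult_le_compat_l; auto.
Qed.

Lemma norm2_le_lyap x : 0 <= fst x -> (1 - r) * norm2 x <= (1 + g) * lyap x.
Proof.
  destruct x as [u v]; intros hu; simpl in hu.
  pose proof (norm2_le_abs (u, v)) as hn; simpl in hn; unfold lyap; simpl.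
  rewrite (Rabs_right u) in hn by lra.
  assert (hv : Rabs v <= Rabs (g * u + v) + g * u).
  { replace v with ((g * u + v) + - (g * u)) at 1 by ring.
    eapply Rle_trans; [apply Rabs_triang|].
    rewrite Rabs_Ropp, (Rabs_right (g * u)) by nra; lra. }
  assert (0 <= Rabs (g * u + v)) by apply Rabs_pos.
  assert ((1 - r) * norm2 (u, v) <= (1 - r) * (u + Rabs (g * u + v) + g * u))
    by (apply Rmult_le_compat_l; lra).
  assert (0 <= g * ((1 - r) * Rabs (g * u + v))) by (repeat apply Rmult_le_pos; lra).
  assert (0 <= r * ((1 + g) * u)) by (repeat apply Rmult_le_pos; lra).
  lra.
Qed.

Lemma norm2_iter_Slinear k x : Slinear x ->
  norm2 (iter_M g r k x) <= (1 + g) / (1 - r) * lyap x * (r * (2 - r)) ^ k.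
Proof.
  intros hx.
  pose proof (norm2_le_lyap _ (Splus_fst_nonneg _ _ (proj1 (Slinear_iter k x hx)))) as hn.
  pose proof (lyap_iter k x hx) as hl.
  apply (Rmult_le_reg_l (1 - r)); [lra|].
  apply (Rle_trans _ _ _ hn).
  replace ((1 - r) * ((1 + g) / (1 - r) * lyap x * (r * (2 - r)) ^ k))
    with ((1 + g) * ((r * (2 - r)) ^ k * lyap x)) by (field; lra).
  apply Rmult_le_compat_l; lra.
Qed.

Lemma reaches_Slinear x : S_set g x -> reaches Slinear x.
Proof.
  intros hx; apply (reaches_bind _ _ _ (reaches_Sinv x hx)); intros y hy.
  destruct (pow_lt_1_zero r ltac:(rewrite Rabs_right; lra) ((1 - r) / 4) ltac:(lra))
    as [N hN].
  specialize (hN N (le_n N)); rewrite Rabs_right in hN by (apply Rle_ge, pow_le; lra).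
  apply (reaches_bind _ _ _ (reaches_Splus_fst_le_pow N y hy)); intros [u v] [hz hu].
  destruct (INR_archimed (1/2) (g * u + v + 1/2)) as [n hn]; [lra|].
  apply (reaches_Slinear_bounded n); simpl in *; lra.
Qed.

End Dynamics.

Theorem proposition4 (gamma rho : R) (x0 : R * R) :
  1 <= gamma -> 0 <= rho < 1 -> S_set gamma x0 ->
  (exists N : nat, forall n : nat, (N <= n)%nat -> Splus gamma (iter_M gamma rho n x0)) /\
  Un_cv (fun n => norm2 (iter_M gamma rho n x0)) 0.
Proof.
  intros hg hr hx0.
  destruct (reaches_Slinear gamma rho hg hr x0 hx0) as [K hK].
  set (w := iter_M gamma rho K x0) in hK.
  assert (htail : forall n, (K <= n)%nat -> iter_M gamma rho n x0 = iter_M gamma rho (n - K) w).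
  { intros n hn; unfold w; rewrite <- iter_M_add; f_equal; lia. }
  split.
  - exists K; intros n hn; rewrite htail by auto.
    apply (Slinear_iter gamma rho hg hr _ _ hK).
  - apply (Un_cv_0_of_geometric_bound _ ((1 + gamma) / (1 - rho) * lyap gamma rho w)
             (rho * (2 - rho)) K); [nra|].
    intros n hn; rewrite htail by auto; split; [apply sqrt_pos|].
    apply norm2_iter_Slinear; auto.
Qed.
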